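(* If $p$ is a two-phase solution of the focusing NLS equation, then $\nu_1$ and $\nu_2$ are bounded: there is $M>0$ with $\nu_1(x,t)^2+\nu_2(x,t)^2<M$ for all $(x,t)\in\mathbb R^2$.
   Context: Let $p(x,t)$, $(x,t)\in\mathbb R^2$, be a smooth complex-valued solution of the focusing nonlinear Schrödinger equation $ip_t+p_{xx}+2|p|^2p=0$; $^*$ denotes complex conjugation and subscripts denote partial derivatives. Put $\mathbb U=\begin{pmatrix}-i\lambda& ip\\ ip^*& i\lambda\end{pmatrix}$ and $\mathbb V=\begin{pmatrix}-2i\lambda^2+i|p|^2& 2i\lambda p-p_x\\ 2i\lambda p^*+p^*_x& 2i\lambda^2-i|p|^2\end{pmatrix}$. The solution $p$ is called a two-phase solution if there exist real constants $c_0,c_1,c_2$ such that the matrix $\Psi=\begin{pmatrix}\Psi_{11}&\Psi_{12}\\ \Psi_{21}&-\Psi_{11}\end{pmatrix}$ with $\Psi_{11}=-i\lambda^3-ic_2\lambda^2+(\tfrac12 i|p|^2-ic_1)\lambda+\tfrac14(pp^*_x-p_xp^* )+\tfrac12 ic_2|p|^2-ic_0$, $\Psi_{12}=ip\lambda^2+(-\tfrac12p_x+ic_2p)\lambda-\tfrac14 ip_{xx}-\tfrac12 ip|p|^2-\tfrac12c_2p_x+ic_1p$, $\Psi_{21}=ip^*\lambda^2+(\tfrac12p^*_x+ic_2p^* )\lambda-\tfrac14 ip^*_{xx}-\tfrac12 ip^*|p|^2+\tfrac12c_2p^*_x+ic_1p^*$ satisfies $\Psi_x=[\mathbb U,\Psi]$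 and $\Psi_t=[\mathbb V,\Psi]$ identically in $\lambda\in\mathbb C$. Set $\nu_1=|p|^2$ and $\nu_2=i(p^*p_x-pp^*_x)$ (both real). *)

From Stdlib Require Import Reals.
Open Scope R_scope.

Record Cx : Type := mkC { Re : R ; Im : R }.

Definition RC (r : R) : Cx := mkC r 0.
Definition Ci : Cx := mkC 0 1.
Definition Cadd (a b : Cx) : Cx := mkC (Re a + Re b) (Im a + Im b).
Definition Copp (a : Cx) : Cx := mkC (- Re a) (- Im a).
Definition Csub (a b : Cx) : Cx := Cadd a (Copp b).
Definition Cmul (a b : Cx) : Cx :=
  mkC (Re a * Re b - Im a * Im b) (Re a * Im b + Im a * Re b).
Definition Cconj (a : Cx) : Cx := mkC (Re a) (- Im a).
Definition Cnorm2 (a : Cx) : R := Re a ^ 2 + Im a ^ 2.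

Declare Scope C_scope.
Delimit Scope C_scope with C.
Infix "+" := Cadd : C_scope.
Infix "-" := Csub : C_scope.
Infix "*" := Cmul : C_scope.
Notation "- a" := (Copp a) : C_scope.

Definition cont2 (f : R -> R -> R) : Prop :=
  forall x t eps, 0 < eps -> exists delta, 0 < delta /\
    forall x' t', Rabs (x' - x) < delta -> Rabs (t' - t) < delta ->
      Rabs (f x' t' - f x t) < eps.

Definition Cderiv_x (F : R -> R -> Cx) (x t : R) (d : Cx) : Prop :=
  derivable_pt_lim (fun y => Re (F y t)) x (Re d) /\
  derivable_pt_lim (fun y => Im (F y t)) x (Im d).
Definition Cderiv_t (F : R -> R -> Cx) (x t : R) (d : Cx) : Prop :=
  derivable_pt_lim (fun s => Re (F x s)) t (Re d) /\
  derivable_pt_lim (fun s => Im (F x s)) t (Im d).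

(** [P] is the family of all partial derivatives of the smooth function
    [P 0 0] : R^2 -> Cx, i.e. [P i j] = d_x^i d_t^j (P 0 0): every [P i j] is
    jointly continuous, and its partial derivatives in x and t are
    [P (S i) j] and [P i (S j)].  A function p is Cx^infinity iff such a
    family with [P 0 0 = p] exists (and then the family is unique). *)
Definition smooth_family (P : nat -> nat -> R -> R -> Cx) : Prop :=
  forall i j,
    cont2 (fun x t => Re (P i j x t)) /\ cont2 (fun x t => Im (P i j x t)) /\
    forall x t, Cderiv_x (P i j) x t (P (S i) j x t) /\
                Cderiv_t (P i j) x t (P i (S j) x t).

Definition focusing_NLS (P : nat -> nat -> R -> R -> Cx) : Prop :=
  forall x t,
    (Ci * P 0%nat 1%nat x t + P 2%nat 0%nat x t
     + RC (2 * Cnorm2 (P 0%nat 0%nat x t)) * P 0%nat 0%nat x t)%C = RC 0.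

Record M2 : Type := mkM2 { m11 : Cx ; m12 : Cx ; m21 : Cx ; m22 : Cx }.

Definition M2mul (A B : M2) : M2 :=
  mkM2 (m11 A * m11 B + m12 A * m21 B)%C (m11 A * m12 B + m12 A * m22 B)%C
       (m21 A * m11 B + m22 A * m21 B)%C (m21 A * m12 B + m22 A * m22 B)%C.
Definition M2sub (A B : M2) : M2 :=
  mkM2 (m11 A - m11 B)%C (m12 A - m12 B)%C (m21 A - m21 B)%C (m22 A - m22 B)%C.
Definition M2comm (A B : M2) : M2 := M2sub (M2mul A B) (M2mul B A).

Definition M2deriv_x (F : R -> R -> M2) (x t : R) (D : M2) : Prop :=
  Cderiv_x (fun y s => m11 (F y s)) x t (m11 D) /\
  Cderiv_x (fun y s => m12 (F y s)) x t (m12 D) /\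
  Cderiv_x (fun y s => m21 (F y s)) x t (m21 D) /\
  Cderiv_x (fun y s => m22 (F y s)) x t (m22 D).
Definition M2deriv_t (F : R -> R -> M2) (x t : R) (D : M2) : Prop :=
  Cderiv_t (fun y s => m11 (F y s)) x t (m11 D) /\
  Cderiv_t (fun y s => m12 (F y s)) x t (m12 D) /\
  Cderiv_t (fun y s => m21 (F y s)) x t (m21 D) /\
  Cderiv_t (fun y s => m22 (F y s)) x t (m22 D).

Section Lax.
Local Open Scope C_scope.
Variable P : nat -> nat -> R -> R -> Cx.

Definition p_ (x t : R) : Cx := P 0%nat 0%nat x t.
Definition px_ (x t : R) : Cx := P 1%nat 0%nat x t.
Definition pxx_ (x t : R) : Cx := P 2%nat 0%nat x t.
Definition abs2p (x t : R) : Cx := RC (Cnorm2 (p_ x t)).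

Definition U_mat (l : Cx) (x t : R) : M2 :=
  mkM2 (- (Ci * l)) (Ci * p_ x t) (Ci * Cconj (p_ x t)) (Ci * l).

Definition V_mat (l : Cx) (x t : R) : M2 :=
  mkM2 (- (RC 2 * Ci * l * l) + Ci * abs2p x t)
       (RC 2 * Ci * l * p_ x t - px_ x t)
       (RC 2 * Ci * l * Cconj (p_ x t) + Cconj (px_ x t))
       (RC 2 * Ci * l * l - Ci * abs2p x t).

Definition Psi11 (c0 c1 c2 : R) (l : Cx) (x t : R) : Cx :=
  - (Ci * l * l * l) - Ci * RC c2 * l * l
  + (RC (1/2) * Ci * abs2p x t - Ci * RC c1) * l
  + RC (1/4) * (p_ x t * Cconj (px_ x t) - px_ x t * Cconj (p_ x t))
  + RC (1/2) * Ci * RC c2 * abs2p x t - Ci * RC c0.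

Definition Psi12 (c0 c1 c2 : R) (l : Cx) (x t : R) : Cx :=
  Ci * p_ x t * l * l
  + (- (RC (1/2) * px_ x t) + Ci * RC c2 * p_ x t) * l
  - RC (1/4) * Ci * pxx_ x t
  - RC (1/2) * Ci * p_ x t * abs2p x t
  - RC (1/2) * RC c2 * px_ x t
  + Ci * RC c1 * p_ x t.

Definition Psi21 (c0 c1 c2 : R) (l : Cx) (x t : R) : Cx :=
  Ci * Cconj (p_ x t) * l * l
  + (RC (1/2) * Cconj (px_ x t) + Ci * RC c2 * Cconj (p_ x t)) * l
  - RC (1/4) * Ci * Cconj (pxx_ x t)
  - RC (1/2) * Ci * Cconj (p_ x t) * abs2p x t
  + RC (1/2) * RC c2 * Cconj (px_ x t)
  + Ci * RC c1 * Cconj (p_ x t).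

Definition Psi_mat (c0 c1 c2 : R) (l : Cx) (x t : R) : M2 :=
  mkM2 (Psi11 c0 c1 c2 l x t) (Psi12 c0 c1 c2 l x t)
       (Psi21 c0 c1 c2 l x t) (- Psi11 c0 c1 c2 l x t).

Definition two_phase : Prop :=
  exists c0 c1 c2 : R, forall (l : Cx) (x t : R),
    M2deriv_x (Psi_mat c0 c1 c2 l) x t
              (M2comm (U_mat l x t) (Psi_mat c0 c1 c2 l x t)) /\
    M2deriv_t (Psi_mat c0 c1 c2 l) x t
              (M2comm (V_mat l x t) (Psi_mat c0 c1 c2 l x t)).

(** nu1 = |p|^2, nu2 = i (p* p_x - p p*_x) (a real number; we take its real part) *)
Definition nu1 (x t : R) : R := Cnorm2 (p_ x t).
Definition nu2 (x t : R) : R :=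
  Re (Ci * (Cconj (p_ x t) * px_ x t - p_ x t * Cconj (px_ x t))).
End Lax.

(* For real [λ] the matrices [U], [V] and [Ψ] are traceless and anti-Hermitian,
   i.e. lie in su(2), and on su(2) the form [|a|^2 + |b|^2] (the determinant of
   [[ia, b], [-b*, -ia]]) is invariant under commutators: [⟨Ψ, [A,Ψ]⟩ = 0].
   Hence [|Ψ11|^2 + |Ψ12|^2] is constant along both Lax flows, so [Im Ψ11(λ)]
   is bounded on R^2 for every real [λ].  This imaginary part is a cubic in [λ]
   whose coefficients are affine in [ν1] and [ν2]; evaluating it at [λ = 0] and
   [λ = 1] bounds both. *)
From Stdlib Require Import Reals Lra Psatz.
Open Scope R_scope.

Definition su2 (A : M2) : Prop :=
  Re (m11 A) = 0 /\ Re (m22 A) = 0 /\ Im (m22 A) = - Im (m11 A) /\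
  Re (m21 A) = - Re (m12 A) /\ Im (m21 A) = Im (m12 A).

Definition su2_norm2 (S : M2) : R := Cnorm2 (m11 S) + Cnorm2 (m12 S).

Definition su2_dot (S T : M2) : R :=
  Re (m11 S) * Re (m11 T) + Im (m11 S) * Im (m11 T) +
  Re (m12 S) * Re (m12 T) + Im (m12 S) * Im (m12 T).

Lemma su2_dot_comm (A S : M2) : su2 A -> su2 S -> su2_dot S (M2comm A S) = 0.
Proof.
  destruct A as [[a1 a2] [a3 a4] [a5 a6] [a7 a8]].
  destruct S as [[s1 s2] [s3 s4] [s5 s6] [s7 s8]].
  unfold su2; cbn; intros (-> & -> & -> & -> & ->) (-> & -> & -> & -> & ->).
  unfold su2_dot, M2comm, M2sub, M2mul, Csub, Cadd, Copp, Cmul; cbn; ring.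
Qed.

Lemma su2_U (P : nat -> nat -> R -> R -> Cx) (r x t : R) :
  su2 (U_mat P (RC r) x t).
Proof.
  unfold su2, U_mat, p_, Cmul, Copp, Cconj, RC, Ci; cbn.
  destruct (P 0%nat 0%nat x t) as [a b]; cbn; repeat split; ring.
Qed.

Lemma su2_V (P : nat -> nat -> R -> R -> Cx) (r x t : R) :
  su2 (V_mat P (RC r) x t).
Proof.
  unfold su2, V_mat, abs2p, Cnorm2, p_, px_, Csub, Cadd, Cmul, Copp, Cconj, RC, Ci; cbn.
  destruct (P 0%nat 0%nat x t) as [a b]; destruct (P 1%nat 0%nat x t) as [c d]; cbn.
  repeat split; ring.
Qed.

Lemma su2_Psi (P : nat -> nat -> R -> R -> Cx) (c0 c1 c2 r x t : R) :
  su2 (Psi_mat P c0 c1 c2 (RC r) x t).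
Proof.
  unfold su2, Psi_mat, Psi11, Psi12, Psi21, abs2p, Cnorm2, p_, px_, pxx_,
    Csub, Cadd, Cmul, Copp, Cconj, RC, Ci; cbn.
  destruct (P 0%nat 0%nat x t) as [a b]; destruct (P 1%nat 0%nat x t) as [c d];
  destruct (P 2%nat 0%nat x t) as [e f]; cbn.
  repeat split; ring.
Qed.

Lemma derivable_pt_lim_Cnorm2 (f : R -> Cx) (y : R) (d : Cx) :
  derivable_pt_lim (fun z => Re (f z)) y (Re d) ->
  derivable_pt_lim (fun z => Im (f z)) y (Im d) ->
  derivable_pt_lim (fun z => Cnorm2 (f z)) y
    (2 * (Re (f y) * Re d + Im (f y) * Im d)).
Proof.
  intros Hre Him.
  apply derivable_pt_lim_ext with
    (f := ((fun z => Re (f z)) * (fun z => Re (f z)) +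
           (fun z => Im (f z)) * (fun z => Im (f z)))%F).
  { intro z; unfold plus_fct, mult_fct, Cnorm2; ring. }
  replace (2 * (Re (f y) * Re d + Im (f y) * Im d)) with
    (Re d * Re (f y) + Re (f y) * Re d + (Im d * Im (f y) + Im (f y) * Im d))
    by ring.
  apply derivable_pt_lim_plus; apply derivable_pt_lim_mult; assumption.
Qed.

Lemma derivable_pt_lim_su2_norm2 (g : R -> M2) (y : R) (D : M2) :
  derivable_pt_lim (fun z => Re (m11 (g z))) y (Re (m11 D)) ->
  derivable_pt_lim (fun z => Im (m11 (g z))) y (Im (m11 D)) ->
  derivable_pt_lim (fun z => Re (m12 (g z))) y (Re (m12 D)) ->
  derivable_pt_lim (fun z => Im (m12 (g z))) y (Im (m12 D)) ->
  derivable_pt_lim (fun z => su2_norm2 (g z)) y (2 * su2_dot (g y) D).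
Proof.
  intros H11re H11im H12re H12im.
  replace (2 * su2_dot (g y) D) with
    (2 * (Re (m11 (g y)) * Re (m11 D) + Im (m11 (g y)) * Im (m11 D)) +
     2 * (Re (m12 (g y)) * Re (m12 D) + Im (m12 (g y)) * Im (m12 D)))
    by (unfold su2_dot; ring).
  apply (derivable_pt_lim_plus (fun z => Cnorm2 (m11 (g z)))
                               (fun z => Cnorm2 (m12 (g z))));
    apply derivable_pt_lim_Cnorm2; assumption.
Qed.

Lemma derivable_pt_lim_zero_const (g : R -> R) :
  (forall y, derivable_pt_lim g y 0) -> forall a b, g a = g b.
Proof.
  intros Hg.
  assert (Hlt : forall u v, u < v -> g u = g v).
  { intros u v Huv.
    destruct (MVT_cor2 g (fun _ => 0) u v Huv) as [c [Hc _]];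
      [intros; apply Hg | lra]. }
  intros a b; destruct (Rtotal_order a b) as [Hab | [-> | Hab]];
    [auto | reflexivity | symmetry; auto].
Qed.

Lemma partials_zero_const (F : R -> R -> R) :
  (forall x t, derivable_pt_lim (fun y => F y t) x 0) ->
  (forall x t, derivable_pt_lim (fun s => F x s) t 0) ->
  forall x t, F x t = F 0 0.
Proof.
  intros Hx Ht x t.
  rewrite (derivable_pt_lim_zero_const (fun y => F y t) (fun y => Hx y t) x 0).
  exact (derivable_pt_lim_zero_const (F 0) (Ht 0) t 0).
Qed.

Lemma two_phase_Psi_norm2_const (P : nat -> nat -> R -> R -> Cx) (c0 c1 c2 : R) :
  (forall (l : Cx) (x t : R),
    M2deriv_x (Psi_mat P c0 c1 c2 l) x t
              (M2comm (U_mat P l x t) (Psi_mat P c0 c1 c2 l x t)) /\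
    M2deriv_t (Psi_mat P c0 c1 c2 l) x t
              (M2comm (V_mat P l x t) (Psi_mat P c0 c1 c2 l x t))) ->
  forall r x t, su2_norm2 (Psi_mat P c0 c1 c2 (RC r) x t) =
                su2_norm2 (Psi_mat P c0 c1 c2 (RC r) 0 0).
Proof.
  intros Hlax r.
  apply (partials_zero_const (fun x t => su2_norm2 (Psi_mat P c0 c1 c2 (RC r) x t))).
  - intros x t; destruct (Hlax (RC r) x t) as [[[H11re H11im] [[H12re H12im] _]] _].
    rewrite <- (Rmult_0_r 2),
      <- (su2_dot_comm _ _ (su2_U P r x t) (su2_Psi P c0 c1 c2 r x t)).
    exact (derivable_pt_lim_su2_norm2 (fun y => Psi_mat P c0 c1 c2 (RC r) y t) x _
             H11re H11im H12re H12im).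
  - intros x t; destruct (Hlax (RC r) x t) as [_ [[H11re H11im] [[H12re H12im] _]]].
    rewrite <- (Rmult_0_r 2),
      <- (su2_dot_comm _ _ (su2_V P r x t) (su2_Psi P c0 c1 c2 r x t)).
    exact (derivable_pt_lim_su2_norm2 (fun s => Psi_mat P c0 c1 c2 (RC r) x s) t _
             H11re H11im H12re H12im).
Qed.

Lemma Im_Psi11_real (P : nat -> nat -> R -> R -> Cx) (c0 c1 c2 r x t : R) :
  Im (Psi11 P c0 c1 c2 (RC r) x t) =
  - r ^ 3 - c2 * r ^ 2 + (nu1 P x t / 2 - c1) * r
  + nu2 P x t / 4 + c2 * nu1 P x t / 2 - c0.
Proof.
  unfold nu1, nu2, Psi11, abs2p, Cnorm2, p_, px_, Csub, Cadd, Cmul, Copp, Cconj, RC, Ci; cbn.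
  destruct (P 0%nat 0%nat x t) as [a b]; destruct (P 1%nat 0%nat x t) as [c d]; cbn.
  field.
Qed.

Definition bounded2 (f : R -> R -> R) : Prop :=
  exists K, forall x t, Rabs (f x t) <= K.

Lemma bounded2_of_sqr_le (f : R -> R -> R) (C : R) :
  (forall x t, f x t ^ 2 <= C) -> bounded2 f.
Proof.
  intros Hf; exists (1 + C); intros x t.
  specialize (Hf x t); pose proof (Rabs_pos (f x t)).
  rewrite <- (pow2_abs (f x t)) in Hf; nra.
Qed.

Lemma bounded2_affine (f g h : R -> R -> R) (a b c : R) :
  (forall x t, f x t = a * g x t + b * h x t + c) ->
  bounded2 g -> bounded2 h -> bounded2 f.
Proof.
  intros Hf [Kg Hg] [Kh Hh].
  exists (Rabs a * Kg + Rabs b * Kh + Rabs c); intros x t; rewrite Hf.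
  eapply Rle_trans; [apply Rabs_triang |].
  eapply Rle_trans; [apply Rplus_le_compat_r, Rabs_triang |].
  rewrite !Rabs_mult.
  pose proof (Rmult_le_compat_l _ _ _ (Rabs_pos a) (Hg x t)).
  pose proof (Rmult_le_compat_l _ _ _ (Rabs_pos b) (Hh x t)).
  lra.
Qed.

Lemma bounded2_sum_sqr (f g : R -> R -> R) :
  bounded2 f -> bounded2 g ->
  exists M, 0 < M /\ forall x t, f x t ^ 2 + g x t ^ 2 < M.
Proof.
  intros [Kf Hf] [Kg Hg]; exists (Kf ^ 2 + Kg ^ 2 + 1); split.
  - nra.
  - intros x t; specialize (Hf x t); specialize (Hg x t).
    pose proof (Rabs_pos (f x t)); pose proof (Rabs_pos (g x t)).
    rewrite <- (pow2_abs (f x t)), <- (pow2_abs (g x t)); nra.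
Qed.

Theorem mainTheorem15 (P : nat -> nat -> R -> R -> Cx) :
  smooth_family P -> focusing_NLS P -> two_phase P ->
  exists M : R, 0 < M /\
    forall x t : R, nu1 P x t ^ 2 + nu2 P x t ^ 2 < M.
Proof.
  intros _ _ [c0 [c1 [c2 Hlax]]].
  set (I r x t := Im (Psi11 P c0 c1 c2 (RC r) x t)).
  assert (HI : forall r, bounded2 (I r)).
  { intro r; apply (bounded2_of_sqr_le _ (su2_norm2 (Psi_mat P c0 c1 c2 (RC r) 0 0))).
    intros x t; rewrite <- (two_phase_Psi_norm2_const P c0 c1 c2 Hlax r x t).
    unfold su2_norm2, Cnorm2; simpl m11; simpl m12; unfold I.
    pose proof (pow2_ge_0 (Re (Psi11 P c0 c1 c2 (RC r) x t))).
    pose proof (pow2_ge_0 (Re (Psi12 P c0 c1 c2 (RC r) x t))).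
    pose proof (pow2_ge_0 (Im (Psi12 P c0 c1 c2 (RC r) x t))).
    lra. }
  assert (Hnu1 : bounded2 (nu1 P)).
  { apply (bounded2_affine _ (I 1) (I 0) 2 (-2) (2 * (1 + c1 + c2))); auto.
    intros x t; unfold I; rewrite !Im_Psi11_real; field. }
  assert (Hnu2 : bounded2 (nu2 P)).
  { apply (bounded2_affine _ (I 0) (nu1 P) 4 (-2 * c2) (4 * c0)); auto.
    intros x t; unfold I; rewrite Im_Psi11_real; field. }
  exact (bounded2_sum_sqr _ _ Hnu1 Hnu2).
Qed.
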